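(* Consider a reasonable rank-one construction with symbolic model $\Omega$. Fix $\varepsilon>0$ and an integer $\ell\ge1$. Then there exists $N(\varepsilon,\ell)$ such that for every integer $N\ge N(\varepsilon,\ell)$ and every $\omega\in\Omega$, the word $W=\omega_1\omega_2\cdots\omega_N$ can be written as $W=ABC$ with (possibly empty) words $A,B,C$ such that $B=1^s$ for some $s\ge0$, and there is a family of occurrences, at pairwise disjoint positions, of building blocks $B_n$ with $n\ge\ell$ inside $A$ and inside $C$, such that the total number of positions of $A$ and of $C$ not covered by these occurrences is at most $\varepsilon N$.
   Context: Rank-one parameters: integers $p_n\ge2$, integers $s_{n,i}\ge0$ ($0\le i\le p_n-1$), $h_1=1$, $h_{n+1}=p_nh_n+\sum_is_{n,i}$, $\sum_n\frac1{h_{n+1}}\sum_is_{n,i}<\infty$. Reasonable: $t_n:=\max_{0\le i\le p_n-1}s_{n,i}=o(h_n)$. Building blocks: $B_1=0$, $B_{n+1}=B_n1^{s_{n,0}}B_n1^{s_{n,1}}\cdots B_n1^{s_{n,p_n-1}}$ (words over $\{0,1\}$, $|B_n|=h_n$). $\Omega\subset\{0,1\}^{\mathbb Z}$ is the set of sequences all of whose finite subwords are subwords of some $B_m$. *)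

(* words are lists of bool (false = 0, true = 1), reals from Stdlib. *)
From Stdlib Require Import Reals ZArith Arith List.
Import ListNotations.
Open Scope R_scope.

(* Rank-one parameters: p n = p_n, s n i = s_{n,i} (meaningful for n >= 1, i < p n). *)

Definition ssum (p : nat -> nat) (s : nat -> nat -> nat) (n : nat) : nat :=
  fold_right Nat.add 0%nat (map (s n) (seq 0 (p n))).

Definition tmax (p : nat -> nat) (s : nat -> nat -> nat) (n : nat) : nat :=
  fold_right Nat.max 0%nat (map (s n) (seq 0 (p n))).

(* h 1 = 1, h (n+1) = p_n h_n + sum_i s_{n,i} for n >= 1; h 0 is junk (= 1). *)
Fixpoint h (p : nat -> nat) (s : nat -> nat -> nat) (n : nat) : nat :=
  match n with
  | O => 1%nat
  | S m => match m with
           | O => 1%nat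
           | _ => (p m * h p s m + ssum p s m)%nat
           end
  end.

(* Building blocks: B 1 = 0, B (n+1) = B_n 1^{s_{n,0}} ... B_n 1^{s_{n,p_n-1}};
   B 0 is junk (= [0]). *)
Fixpoint B (p : nat -> nat) (s : nat -> nat -> nat) (n : nat) : list bool :=
  match n with
  | O => [false]
  | S m => match m with
           | O => [false]
           | _ => concat (map (fun i => B p s m ++ repeat true (s m i)) (seq 0 (p m)))
           end
  end.

Definition reasonable (p : nat -> nat) (s : nat -> nat -> nat) : Prop :=
  forall eps : R, 0 < eps ->
    exists n0 : nat, forall n : nat, (n0 <= n)%nat ->
      INR (tmax p s n) <= eps * INR (h p s n).

Definition subword (u w : list bool) : Prop :=
  exists x y : list bool, w = x ++ u ++ y.

Definition window (omega : Z -> bool) (a : Z) (len : nat) : list bool :=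
  map (fun k => omega (a + Z.of_nat k)%Z) (seq 0 len).

Definition InOmega (p : nat -> nat) (s : nat -> nat -> nat) (omega : Z -> bool) : Prop :=
  forall (a : Z) (len : nat),
    exists m : nat, (1 <= m)%nat /\ subword (window omega a len) (B p s m).

(* An occurrence (pos, n) in w: the factor of w starting at position pos
   (0-based) of length |B_n| equals B_n. *)
Definition occurrence (p : nat -> nat) (s : nat -> nat -> nat)
    (w : list bool) (o : nat * nat) : Prop :=
  (fst o + length (B p s (snd o)) <= length w)%nat /\
  firstn (length (B p s (snd o))) (skipn (fst o) w) = B p s (snd o).

Definition coversb (p : nat -> nat) (s : nat -> nat -> nat)
    (o : nat * nat) (k : nat) : bool :=
  Nat.leb (fst o) k && Nat.ltb k (fst o + length (B p s (snd o))).

Definition good_family (p : nat -> nat) (s : nat -> nat -> nat) (l : nat)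
    (w : list bool) (L : list (nat * nat)) : Prop :=
  (forall o, In o L -> (l <= snd o)%nat /\ occurrence p s w o) /\
  ForallOrdPairs (fun o1 o2 => forall k,
      ~ (coversb p s o1 k = true /\ coversb p s o2 k = true)) L.

Definition uncovered (p : nat -> nat) (s : nat -> nat -> nat)
    (w : list bool) (L : list (nat * nat)) : nat :=
  length (filter (fun k => negb (existsb (fun o => coversb p s o k) L))
                 (seq 0 (length w))).

From Stdlib Require Import Reals ZArith Arith List Lia Lra.
Import ListNotations.
Open Scope nat_scope.

(* Every window of a point of Omega is a factor of some block
   B_m, so everything reduces to a statement about factors of blocks.  Fix a
   density D > 2/eps and a level n0 >= l beyond which every spacer satisfies
   4 D s_{k,i} <= h_k.  Call a word efficient if blocks B_n, n >= l,
   cover all of it except at most |w|/D positions, and nearly efficient if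
   they cover all but at most h_{n0} + |w|/D positions.  Since B_{k+1} is the
   concatenation of the units B_k 1^{s_{k,i}}, and units of level k >= n0 are
   efficient, induction on k shows that every prefix of B_k is nearly
   efficient, that every suffix of B_k is a nearly efficient word followed by
   a run 1^r with 2 D r <= h_k, and finally that every factor of B_k is
   A 1^t C with A and C nearly efficient.  For a window of length N the
   uncovered part is then at most 2 h_{n0} + N/D, which is below eps N once
   N is large. *)

Lemma seq_shifted (a n : nat) : seq a n = map (Nat.add a) (seq 0 n).
Proof.
  induction n as [|n IH]; [reflexivity|].
  rewrite !seq_S, map_app, <- IH. reflexivity.
Qed.

Lemma length_filter_map {A C : Type} (f : C -> bool) (g : A -> C) (xs : list A) :
  length (filter f (map g xs)) = length (filter (fun x => f (g x)) xs).
Proof. rewrite filter_map_swap, length_map. reflexivity. Qed.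

Lemma existsb_map {A C : Type} (f : C -> bool) (g : A -> C) (xs : list A) :
  existsb f (map g xs) = existsb (fun x => f (g x)) xs.
Proof. induction xs as [|x xs IH]; simpl; [reflexivity|]. rewrite IH. reflexivity. Qed.

Lemma existsb_ext_in {A : Type} (f g : A -> bool) (xs : list A) :
  (forall x, In x xs -> f x = g x) -> existsb f xs = existsb g xs.
Proof.
  induction xs as [|x xs IH]; intros Hfg; simpl; [reflexivity|].
  rewrite Hfg by (left; reflexivity).
  rewrite IH by (intros y Hy; apply Hfg; right; exact Hy). reflexivity.
Qed.

Lemma existsb_none {A : Type} (f : A -> bool) (xs : list A) :
  (forall x, In x xs -> f x = false) -> existsb f xs = false.
Proof.
  intros Hf. apply Bool.not_true_iff_false. intros Hex.
  apply existsb_exists in Hex as [x [Hx Hfx]]. rewrite Hf in Hfx by exact Hx. discriminate.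
Qed.

Lemma ForallOrdPairs_app {A : Type} (R : A -> A -> Prop) (xs ys : list A) :
  ForallOrdPairs R xs -> ForallOrdPairs R ys ->
  (forall x y, In x xs -> In y ys -> R x y) -> ForallOrdPairs R (xs ++ ys).
Proof.
  intros Hxs Hys Hxy. induction Hxs as [|x xs Hx Hxs IH]; simpl; [exact Hys|].
  constructor.
  - apply Forall_app. split; [exact Hx|].
    apply Forall_forall. intros y Hy. apply Hxy; simpl; auto.
  - apply IH. intros x' y Hx' Hy. apply Hxy; simpl; auto.
Qed.

Lemma ForallOrdPairs_map {A : Type} (R : A -> A -> Prop) (f : A -> A) (xs : list A) :
  (forall x y, R x y -> R (f x) (f y)) -> ForallOrdPairs R xs -> ForallOrdPairs R (map f xs).
Proof.
  intros Hf Hxs. induction Hxs as [|x xs Hx Hxs IH]; simpl; constructor; [|exact IH].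
  apply Forall_map. exact (Forall_impl _ (Hf x) Hx).
Qed.

Lemma prefix_app_repeat {A : Type} (X P b : list A) (c : A) (n : nat) :
  P ++ b = X ++ repeat c n ->
  (exists y, P ++ y = X) \/ (exists m, m <= n /\ P = X ++ repeat c m).
Proof.
  intros E. apply app_eq_app in E as [z [[-> Ez]|[-> _]]].
  - right. exists (length z). pose proof (f_equal (@length A) Ez) as Hlen.
    rewrite length_app, repeat_length in Hlen.
    apply repeat_eq_app in Ez as [Ez _]. split; [lia | rewrite Ez; reflexivity].
  - left. exists z. reflexivity.
Qed.

Lemma suffix_app_repeat {A : Type} (X a S : list A) (c : A) (n : nat) :
  a ++ S = X ++ repeat c n ->
  exists S' m, (exists x, x ++ S' = X) /\ m <= n /\ S = S' ++ repeat c m.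
Proof.
  intros E. apply app_eq_app in E as [z [[_ Ez]|[-> ->]]].
  - exists [], (length S). pose proof (f_equal (@length A) Ez) as Hlen.
    rewrite length_app, repeat_length in Hlen.
    apply repeat_eq_app in Ez as [_ Ez].
    split; [exists X; apply app_nil_r|]. split; [lia | symmetry; exact Ez].
  - exists z, n. split; [exists a; reflexivity|]. split; [lia | reflexivity].
Qed.

Lemma factor_app_repeat {A : Type} (X a W b : list A) (c : A) (n : nat) :
  a ++ W ++ b = X ++ repeat c n ->
  (exists y, a ++ W ++ y = X) \/
  (exists S' m, (exists x, x ++ S' = X) /\ m <= n /\ W = S' ++ repeat c m).
Proof.
  rewrite app_assoc. intros E.
  destruct (prefix_app_repeat _ _ _ _ _ E) as [[y Ey]|[m [Hm Em]]].
  - left. exists y. rewrite app_assoc. exact Ey.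
  - right. destruct (suffix_app_repeat _ _ _ _ _ Em) as [S' [m' [HS' [Hm' HW]]]].
    exists S', m'. split; [exact HS'|]. split; [lia | exact HW].
Qed.

(* [P] is empty or a prefix of some member of [Us]; dually for suffixes.  These
   describe the partial pieces at the ends of a factor of [concat Us]. *)
Definition prefix_in {A : Type} (Us : list (list A)) (P : list A) : Prop :=
  P = [] \/ exists U b, In U Us /\ U = P ++ b.

Definition suffix_in {A : Type} (Us : list (list A)) (S : list A) : Prop :=
  S = [] \/ exists U a, In U Us /\ U = a ++ S.

Lemma prefix_in_cons {A : Type} (U : list A) (Us : list (list A)) (P : list A) :
  prefix_in Us P -> prefix_in (U :: Us) P.
Proof. intros [->|[V [b [HV E]]]]; [left; reflexivity|right; exists V, b; simpl; auto]. Qed.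

Lemma suffix_in_cons {A : Type} (U : list A) (Us : list (list A)) (S : list A) :
  suffix_in Us S -> suffix_in (U :: Us) S.
Proof. intros [->|[V [a [HV E]]]]; [left; reflexivity|right; exists V, a; simpl; auto]. Qed.

Lemma prefix_concat {A : Type} (Us : list (list A)) (Y y : list A) :
  Y ++ y = concat Us ->
  exists Mid P, incl Mid Us /\ prefix_in Us P /\ Y = concat Mid ++ P.
Proof.
  revert Y; induction Us as [|U Us IH]; intros Y E; simpl in E.
  - apply app_eq_nil in E as [-> _]. exists [], []. split; [apply incl_nil_l|].
    split; [left|]; reflexivity.
  - apply app_eq_app in E as [z [[-> Ez]|[-> _]]].
    + symmetry in Ez. destruct (IH z Ez) as [Mid [P [HM [HP ->]]]].
      exists (U :: Mid), P. split; [apply incl_cons; [left; reflexivity|apply incl_tl, HM]|].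
      split; [apply prefix_in_cons, HP|]. simpl. apply app_assoc.
    + exists [], Y. split; [apply incl_nil_l|]. split; [|reflexivity].
      right. exists (Y ++ z), z. simpl; auto.
Qed.

Lemma suffix_concat {A : Type} (Us : list (list A)) (x S : list A) :
  x ++ S = concat Us ->
  exists S' Mid, suffix_in Us S' /\ incl Mid Us /\ S = S' ++ concat Mid.
Proof.
  revert x; induction Us as [|U Us IH]; intros x E; simpl in E.
  - apply app_eq_nil in E as [_ ->]. exists [], []. split; [left; reflexivity|].
    split; [apply incl_nil_l | reflexivity].
  - apply app_eq_app in E as [z [[-> Ez]|[-> ->]]].
    + symmetry in Ez. destruct (IH z Ez) as [S' [Mid [HS [HM ->]]]].
      exists S', Mid. split; [apply suffix_in_cons, HS|]. split; [apply incl_tl, HM|reflexivity].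
    + exists z, Us. split; [right; exists (x ++ z), x; simpl; auto|].
      split; [apply incl_tl, incl_refl | reflexivity].
Qed.

Lemma factor_concat {A : Type} (Us : list (list A)) (x W y : list A) :
  x ++ W ++ y = concat Us ->
  (exists U a b, In U Us /\ U = a ++ W ++ b) \/
  (exists S Mid P, suffix_in Us S /\ incl Mid Us /\ prefix_in Us P /\
                   W = S ++ concat Mid ++ P).
Proof.
  revert x; induction Us as [|U Us IH]; intros x E; simpl in E.
  - apply app_eq_nil in E as [_ E]. apply app_eq_nil in E as [-> _].
    right. exists [], [], []. split; [left; reflexivity|]. split; [apply incl_nil_l|].
    split; [left|]; reflexivity.
  - apply app_eq_app in E as [z [[-> Ez]|[-> Ez]]].
    + symmetry in Ez. destruct (IH z Ez) as [[V [a [b [HV HVe]]]]|[S [Mid [P [HS [HM [HP HW]]]]]]].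
      * left. exists V, a, b. simpl; auto.
      * right. exists S, Mid, P. split; [apply suffix_in_cons, HS|].
        split; [apply incl_tl, HM|]. split; [apply prefix_in_cons, HP | exact HW].
    + apply app_eq_app in Ez as [z2 [[-> Ez2]|[-> _]]].
      * symmetry in Ez2. destruct (prefix_concat Us z2 y Ez2) as [Mid [P [HM [HP ->]]]].
        right. exists z, Mid, P. split; [right; exists (x ++ z), x; simpl; auto|].
        split; [apply incl_tl, HM|]. split; [apply prefix_in_cons, HP | reflexivity].
      * left. exists (x ++ W ++ z2), x, z2. simpl; auto.
Qed.

Section Coverings.

Variables (p : nat -> nat) (s : nat -> nat -> nat) (l : nat).

Definition coverable (w : list bool) (c : nat) : Prop :=
  exists L, good_family p s l w L /\ uncovered p s w L <= c.

Definition shift_family (n : nat) (L : list (nat * nat)) : list (nat * nat) :=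
  map (fun o => (n + fst o, snd o)) L.

Lemma coversb_in_word (w : list bool) (o : nat * nat) (k : nat) :
  occurrence p s w o -> coversb p s o k = true -> k < length w.
Proof.
  unfold occurrence, coversb. intros [Hlen _] Hk.
  apply andb_prop in Hk as [_ Hk]. apply Nat.ltb_lt in Hk. lia.
Qed.

Lemma coversb_shift_below (n k : nat) (o : nat * nat) :
  k < n -> coversb p s (n + fst o, snd o) k = false.
Proof.
  intros Hk. unfold coversb; simpl.
  replace (n + fst o <=? k) with false by (symmetry; apply Nat.leb_gt; lia). reflexivity.
Qed.

Lemma coversb_shift (n j : nat) (o : nat * nat) :
  coversb p s (n + fst o, snd o) (n + j) = coversb p s o j.
Proof.
  unfold coversb; simpl.
  destruct (Nat.leb_spec0 (n + fst o) (n + j)), (Nat.leb_spec0 (fst o) j),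
    (Nat.ltb_spec0 (n + j) (n + fst o + length (B p s (snd o)))),
    (Nat.ltb_spec0 j (fst o + length (B p s (snd o)))); simpl; reflexivity || lia.
Qed.

Lemma occurrence_app_l (u v : list bool) (o : nat * nat) :
  occurrence p s u o -> occurrence p s (u ++ v) o.
Proof.
  unfold occurrence. intros [Hlen Hocc]. rewrite length_app. split; [lia|].
  rewrite skipn_app, firstn_app, length_skipn.
  replace (fst o - length u) with 0 by lia.
  replace (length (B p s (snd o)) - (length u - fst o)) with 0 by lia.
  rewrite firstn_O, app_nil_r. exact Hocc.
Qed.

Lemma occurrence_app_r (u v : list bool) (o : nat * nat) :
  occurrence p s v o -> occurrence p s (u ++ v) (length u + fst o, snd o).
Proof.
  unfold occurrence; simpl. intros [Hlen Hocc]. rewrite length_app. split; [lia|].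
  rewrite skipn_app, skipn_all2 by lia. simpl.
  replace (length u + fst o - length u) with (fst o) by lia. exact Hocc.
Qed.

Lemma good_family_app (u v : list bool) (L1 L2 : list (nat * nat)) :
  good_family p s l u L1 -> good_family p s l v L2 ->
  good_family p s l (u ++ v) (L1 ++ shift_family (length u) L2).
Proof.
  intros [HL1 HD1] [HL2 HD2]. split.
  - intros o Ho. apply in_app_iff in Ho as [Ho|Ho].
    + destruct (HL1 o Ho) as [Hlev Hocc]. split; [exact Hlev | apply occurrence_app_l, Hocc].
    + apply in_map_iff in Ho as [o' [<- Ho']]. destruct (HL2 o' Ho') as [Hlev Hocc].
      split; [exact Hlev | apply occurrence_app_r, Hocc].
  - apply ForallOrdPairs_app; [exact HD1| |].
    + apply ForallOrdPairs_map; [|exact HD2]. intros o1 o2 Hdisj k [Hk1 Hk2].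
      destruct (Nat.lt_ge_cases k (length u)) as [Hk|Hk].
      * rewrite coversb_shift_below in Hk1 by exact Hk. discriminate.
      * replace k with (length u + (k - length u)) in Hk1, Hk2 by lia.
        rewrite coversb_shift in Hk1, Hk2. exact (Hdisj _ (conj Hk1 Hk2)).
    + intros o1 o2 Ho1 Ho2 k [Hk1 Hk2]. apply in_map_iff in Ho2 as [o2' [<- _]].
      pose proof (coversb_in_word u o1 k (proj2 (HL1 o1 Ho1)) Hk1) as Hk.
      rewrite coversb_shift_below in Hk2 by exact Hk. discriminate.
Qed.

Lemma uncovered_app (u v : list bool) (L1 L2 : list (nat * nat)) :
  (forall o, In o L1 -> occurrence p s u o) ->
  uncovered p s (u ++ v) (L1 ++ shift_family (length u) L2) =
  uncovered p s u L1 + uncovered p s v L2.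
Proof.
  intros HL1. unfold uncovered, shift_family.
  rewrite length_app, seq_app, filter_app, length_app. simpl.
  rewrite (seq_shifted (length u)), length_filter_map. f_equal; f_equal; apply filter_ext_in.
  - intros k Hk. apply in_seq in Hk. rewrite existsb_app, existsb_map.
    rewrite (existsb_none (fun o => coversb p s (length u + fst o, snd o) k)),
      Bool.orb_false_r by (intros o _; apply coversb_shift_below; lia).
    reflexivity.
  - intros j _. rewrite existsb_app, existsb_map.
    rewrite (existsb_none (fun o => coversb p s o (length u + j))) by
      (intros o Ho; apply Bool.not_true_iff_false; intros Hc;
       pose proof (coversb_in_word u o _ (HL1 o Ho) Hc); lia).
    simpl. f_equal. apply existsb_ext_in. intros o _. apply coversb_shift.
Qed.

Lemma coverable_trivial (w : list bool) : coverable w (length w).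
Proof.
  exists []. split; [split; [intros o []|constructor]|].
  unfold uncovered; simpl. rewrite filter_true, length_seq. reflexivity.
Qed.

Lemma coverable_block (k : nat) : l <= k -> coverable (B p s k) 0.
Proof.
  intros Hk. exists [(0, k)]. split; [split|].
  - intros o [<-|[]]. split; [exact Hk|]. split; [simpl; lia | apply firstn_all].
  - repeat constructor.
  - unfold uncovered. rewrite (filter_ext_in _ (fun _ => false)), filter_false; [reflexivity|].
    intros j Hj. apply in_seq in Hj. unfold coversb; simpl.
    replace (j <? length (B p s k)) with true by (symmetry; apply Nat.ltb_lt; lia).
    reflexivity.
Qed.

Lemma coverable_app (u v : list bool) (a b : nat) :
  coverable u a -> coverable v b -> coverable (u ++ v) (a + b).
Proof.
  intros [L1 [HL1 Hu1]] [L2 [HL2 Hu2]]. exists (L1 ++ shift_family (length u) L2).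
  split; [apply good_family_app; assumption|].
  rewrite uncovered_app by (intros o Ho; exact (proj2 (proj1 HL1 o Ho))). lia.
Qed.

End Coverings.

Section Blocks.

Variables (p : nat -> nat) (s : nat -> nat -> nat).

Definition units (k : nat) : list (list bool) :=
  map (fun i => B p s k ++ repeat true (s k i)) (seq 0 (p k)).

Lemma B_succ (k : nat) : 1 <= k -> B p s (S k) = concat (units k).
Proof. intros Hk. destruct k; [lia | reflexivity]. Qed.

Lemma h_succ (k : nat) : 1 <= k -> h p s (S k) = p k * h p s k + ssum p s k.
Proof. intros Hk. destruct k; [lia | reflexivity]. Qed.

Lemma length_concat_spaced (X : list bool) (f : nat -> nat) (xs : list nat) :
  length (concat (map (fun i => X ++ repeat true (f i)) xs)) =
  length xs * length X + fold_right Nat.add 0 (map f xs).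
Proof.
  induction xs as [|x xs IH]; simpl; [reflexivity|].
  rewrite !length_app, repeat_length, IH. lia.
Qed.

Lemma length_B (k : nat) : length (B p s k) = h p s k.
Proof.
  induction k as [|k IH]; [reflexivity|]. destruct k as [|k]; [reflexivity|].
  rewrite B_succ, h_succ by lia. unfold units, ssum.
  rewrite length_concat_spaced, length_seq, IH. lia.
Qed.

Lemma in_units (k : nat) (U : list bool) :
  In U (units k) -> exists i, i < p k /\ U = B p s k ++ repeat true (s k i).
Proof.
  unfold units. intros HU. apply in_map_iff in HU as [i [<- Hi]].
  apply in_seq in Hi. exists i. split; [lia | reflexivity].
Qed.

Lemma spacer_le_tmax (k i : nat) : i < p k -> s k i <= tmax p s k.
Proof.
  intros Hi. unfold tmax.
  assert (Hin : In (s k i) (map (s k) (seq 0 (p k)))) by (apply in_map, in_seq; lia).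
  induction (map (s k) (seq 0 (p k))) as [|x xs IH]; simpl in *; [contradiction|].
  destruct Hin as [<-|Hin]; [lia | specialize (IH Hin); lia].
Qed.

Hypothesis Hp : forall n, 1 <= n -> 2 <= p n.

Lemma h_double (k : nat) : 1 <= k -> 2 * h p s k <= h p s (S k).
Proof. intros Hk. rewrite h_succ by exact Hk. specialize (Hp k Hk). nia. Qed.

Lemma h_mono (k n : nat) : k <= n -> h p s k <= h p s n.
Proof.
  induction 1 as [|n Hkn IH]; [reflexivity|].
  destruct n as [|n]; [simpl in *; lia|].
  pose proof (h_double (S n) ltac:(lia)). lia.
Qed.

End Blocks.

Section Decomposition.

Variables (p : nat -> nat) (s : nat -> nat -> nat) (l D n0 : nat).

Hypothesis Hp : forall n, 1 <= n -> 2 <= p n.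
Hypothesis Hn0 : 1 <= n0.
Hypothesis Hl : l <= n0.
Hypothesis Hspacers : forall k, n0 <= k -> 4 * D * tmax p s k <= h p s k.

Definition efficient (w : list bool) : Prop :=
  exists c, coverable p s l w c /\ D * c <= length w.

Definition nearly_efficient (w : list bool) : Prop :=
  exists c, coverable p s l w c /\ D * c <= D * h p s n0 + length w.

Lemma spacer_bound (k i : nat) : n0 <= k -> i < p k -> 4 * D * s k i <= h p s k.
Proof.
  intros Hk Hi. pose proof (spacer_le_tmax p s k i Hi). specialize (Hspacers k Hk). nia.
Qed.

Lemma coverable_spacer (r : nat) : coverable p s l (repeat true r) r.
Proof. rewrite <- (repeat_length true r) at 2. apply coverable_trivial. Qed.

Lemma efficient_nil : efficient [].
Proof. exists 0. split; [exact (coverable_trivial p s l []) | simpl; lia]. Qed.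

Lemma efficient_app (u v : list bool) : efficient u -> efficient v -> efficient (u ++ v).
Proof.
  intros [a [Ha Hda]] [b [Hb Hdb]]. exists (a + b).
  split; [apply coverable_app; assumption | rewrite length_app; nia].
Qed.

Lemma efficient_nearly (w : list bool) : efficient w -> nearly_efficient w.
Proof. intros [c [Hc Hdc]]. exists c. split; [exact Hc | lia]. Qed.

Lemma nearly_app (u v : list bool) :
  efficient u -> nearly_efficient v -> nearly_efficient (u ++ v).
Proof.
  intros [a [Ha Hda]] [b [Hb Hdb]]. exists (a + b).
  split; [apply coverable_app; assumption | rewrite length_app; nia].
Qed.

Lemma nearly_app_efficient (u v : list bool) :
  nearly_efficient u -> efficient v -> nearly_efficient (u ++ v).
Proof.
  intros [a [Ha Hda]] [b [Hb Hdb]]. exists (a + b).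
  split; [apply coverable_app; assumption | rewrite length_app; nia].
Qed.

(* The excess h_{n0} pays for any short word, in particular for every factor
   of a block of level at most n0. *)
Lemma nearly_short (w : list bool) : length w <= h p s n0 -> nearly_efficient w.
Proof. intros Hw. exists (length w). split; [apply coverable_trivial | nia]. Qed.

Lemma nearly_low_factor (k : nat) (x W y : list bool) :
  k <= n0 -> x ++ W ++ y = B p s k -> nearly_efficient W.
Proof.
  intros Hk E. apply nearly_short.
  pose proof (f_equal (@length bool) E) as Hlen. rewrite !length_app, length_B in Hlen.
  pose proof (h_mono p s Hp k n0 Hk). lia.
Qed.

Lemma efficient_block_spacer (k r : nat) :
  l <= k -> D * r <= h p s k -> efficient (B p s k ++ repeat true r).
Proof.
  intros Hk Hr. exists (0 + r). split.
  - apply coverable_app; [apply coverable_block, Hk | apply coverable_spacer].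
  - rewrite length_app, repeat_length, length_B. lia.
Qed.

Lemma efficient_spacer_before_block (k r : nat) (v : list bool) :
  l <= k -> D * r <= h p s k -> efficient v ->
  efficient (repeat true r ++ v ++ B p s k).
Proof.
  intros Hk Hr [b [Hb Hdb]]. exists (r + (b + 0)). split.
  - apply coverable_app; [apply coverable_spacer|].
    apply coverable_app; [exact Hb | apply coverable_block, Hk].
  - rewrite !length_app, repeat_length, length_B. nia.
Qed.

Lemma efficient_units (k : nat) (Mid : list (list bool)) :
  n0 <= k -> incl Mid (units p s k) -> efficient (concat Mid).
Proof.
  intros Hk. induction Mid as [|U Mid IH]; intros HM; simpl; [exact efficient_nil|].
  apply efficient_app; [|apply IH; intros V HV; apply HM; right; exact HV].
  destruct (in_units p s k U (HM U (or_introl eq_refl))) as [i [Hi ->]].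
  apply efficient_block_spacer; [lia|]. pose proof (spacer_bound k i Hk Hi). nia.
Qed.

Definition prefixes_nearly (k : nat) : Prop :=
  forall Y y, Y ++ y = B p s k -> nearly_efficient Y.

(* A partial prefix of a unit of level k is a prefix of B_k or B_k followed
   by part of a spacer. *)
Lemma nearly_unit_prefix (k : nat) (P : list bool) :
  n0 <= k -> prefixes_nearly k -> prefix_in (units p s k) P -> nearly_efficient P.
Proof.
  intros Hk IH [->|[U [b [HU E]]]]; [apply efficient_nearly, efficient_nil|].
  destruct (in_units p s k U HU) as [i [Hi ->]].
  symmetry in E. destruct (prefix_app_repeat _ _ _ _ _ E) as [[y Ey]|[m [Hm ->]]].
  - exact (IH P y Ey).
  - apply efficient_nearly, efficient_block_spacer; [lia|].
    pose proof (spacer_bound k i Hk Hi). nia.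
Qed.

Lemma all_prefixes_nearly (k : nat) : prefixes_nearly k.
Proof.
  induction k as [|k IH]; intros Y y E.
  - exact (nearly_low_factor 0 [] Y y (Nat.le_0_l n0) E).
  - destruct (le_lt_dec (S k) n0) as [Hlow|Hhigh];
      [exact (nearly_low_factor (S k) [] Y y Hlow E)|].
    rewrite B_succ in E by lia.
    destruct (prefix_concat _ _ _ E) as [Mid [P [HM [HP ->]]]].
    apply nearly_app; [exact (efficient_units k Mid ltac:(lia) HM)|].
    exact (nearly_unit_prefix k P ltac:(lia) IH HP).
Qed.

Definition suffixes_split (k : nat) : Prop :=
  forall x Sf, x ++ Sf = B p s k ->
  exists S0 r, Sf = S0 ++ repeat true r /\ nearly_efficient S0 /\ 2 * D * r <= h p s k.

(* A partial suffix of a unit of level k ends with a run of at most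
   3 h_k / (4D) ones: the trailing run of a suffix of B_k plus the spacer. *)
Lemma unit_suffix_split (k : nat) (Sf : list bool) :
  n0 <= k -> suffixes_split k -> suffix_in (units p s k) Sf ->
  exists S0 r, Sf = S0 ++ repeat true r /\ nearly_efficient S0 /\ 4 * D * r <= 3 * h p s k.
Proof.
  intros Hk IH [->|[U [a [HU E]]]].
  - exists [], 0. split; [reflexivity|].
    split; [apply efficient_nearly, efficient_nil | lia].
  - destruct (in_units p s k U HU) as [i [Hi ->]]. symmetry in E.
    destruct (suffix_app_repeat _ _ _ _ _ E) as [Sf' [m [[x Ex] [Hm ->]]]].
    destruct (IH x Sf' Ex) as [S0 [r [-> [HS0 Hr]]]].
    exists S0, (r + m). split; [rewrite repeat_app, app_assoc; reflexivity|].
    split; [exact HS0|]. pose proof (spacer_bound k i Hk Hi). nia.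
Qed.

(* If whole units follow the partial suffix, its trailing run is swallowed by
   the block B_k of the last unit, and only that unit's spacer remains. *)
Lemma all_suffixes_split (k : nat) : suffixes_split k.
Proof.
  induction k as [|k IH]; intros x Sf E.
  - exists Sf, 0. split; [symmetry; apply app_nil_r|]. split; [|lia].
    apply (nearly_low_factor 0 x Sf []); [lia | rewrite app_nil_r; exact E].
  - destruct (le_lt_dec (S k) n0) as [Hlow|Hhigh].
    { exists Sf, 0. split; [symmetry; apply app_nil_r|]. split; [|lia].
      apply (nearly_low_factor (S k) x Sf []); [exact Hlow | rewrite app_nil_r; exact E]. }
    pose proof (h_double p s Hp k ltac:(lia)) as Hdouble.
    rewrite B_succ in E by lia.
    destruct (suffix_concat _ _ _ E) as [Sf' [Mid [HS' [HM ->]]]].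
    destruct (unit_suffix_split k Sf' ltac:(lia) IH HS') as [S0 [r [-> [HS0 Hr]]]].
    induction Mid as [|U Mid' _] using rev_ind.
    + exists S0, r. split; [simpl; rewrite !app_nil_r; reflexivity|]. split; [exact HS0 | nia].
    + assert (HU : In U (units p s k)) by (apply HM, in_app_iff; right; left; reflexivity).
      destruct (in_units p s k U HU) as [i [Hi ->]].
      pose proof (spacer_bound k i ltac:(lia) Hi) as Hsi.
      exists (S0 ++ repeat true r ++ concat Mid' ++ B p s k), (s k i). split.
      { rewrite concat_app. simpl. rewrite !app_nil_r, <- !app_assoc. reflexivity. }
      split; [|nia].
      apply nearly_app_efficient; [exact HS0|].
      apply efficient_spacer_before_block; [lia | nia|].
      apply (efficient_units k); [lia|]. intros V HV. apply HM, in_app_iff. left; exact HV.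
Qed.

Lemma all_factors_split (k : nat) (x W y : list bool) :
  x ++ W ++ y = B p s k ->
  exists A t C, W = A ++ repeat true t ++ C /\ nearly_efficient A /\ nearly_efficient C.
Proof.
  revert x W y. induction k as [|k IH]; intros x W y E.
  - exists W, 0, []. split; [simpl; symmetry; apply app_nil_r|].
    split; [exact (nearly_low_factor 0 x W y (Nat.le_0_l n0) E)|].
    apply efficient_nearly, efficient_nil.
  - destruct (le_lt_dec (S k) n0) as [Hlow|Hhigh].
    { exists W, 0, []. split; [simpl; symmetry; apply app_nil_r|].
      split; [exact (nearly_low_factor (S k) x W y Hlow E)|].
      apply efficient_nearly, efficient_nil. }
    rewrite B_succ in E by lia.
    destruct (factor_concat _ _ _ _ E)
      as [[U [a [b [HU EU]]]]|[Sf [Mid [P [HS [HM [HP ->]]]]]]].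
    + destruct (in_units p s k U HU) as [i [Hi ->]]. symmetry in EU.
      destruct (factor_app_repeat _ _ _ _ _ _ EU) as [[z Ez]|[Sf' [m [[x' Ex'] [_ ->]]]]].
      * exact (IH a W z Ez).
      * destruct (all_suffixes_split k x' Sf' Ex') as [S0 [r [-> [HS0 _]]]].
        exists S0, (r + m), []. split; [rewrite repeat_app, !app_nil_r, app_assoc; reflexivity|].
        split; [exact HS0 | apply efficient_nearly, efficient_nil].
    + destruct (unit_suffix_split k Sf ltac:(lia) (all_suffixes_split k) HS)
        as [S0 [r [-> [HS0 _]]]].
      exists S0, r, (concat Mid ++ P). split; [rewrite <- !app_assoc; reflexivity|].
      split; [exact HS0|]. apply nearly_app; [exact (efficient_units k Mid ltac:(lia) HM)|].
      exact (nearly_unit_prefix k P ltac:(lia) (all_prefixes_nearly k) HP).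
Qed.

Theorem factor_decomposition (k : nat) (x W y : list bool) :
  x ++ W ++ y = B p s k ->
  exists A t C LA LC,
    W = A ++ repeat true t ++ C /\
    good_family p s l A LA /\ good_family p s l C LC /\
    D * (uncovered p s A LA + uncovered p s C LC) <= 2 * D * h p s n0 + length W.
Proof.
  intros E. destruct (all_factors_split k x W y E)
    as [A [t [C [-> [[cA [[LA [HLA HuA]] HcA]] [cC [[LC [HLC HuC]] HcC]]]]]]].
  exists A, t, C, LA, LC. split; [reflexivity|]. split; [exact HLA|]. split; [exact HLC|].
  rewrite !length_app. nia.
Qed.

End Decomposition.

Lemma length_window (omega : Z -> bool) (a : Z) (len : nat) :
  length (window omega a len) = len.
Proof. unfold window. rewrite length_map, length_seq. reflexivity. Qed.

Lemma reasonable_spacers (p : nat -> nat) (s : nat -> nat -> nat) (D : nat) :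
  reasonable p s -> 0 < D ->
  exists n1, forall k, n1 <= k -> 4 * D * tmax p s k <= h p s k.
Proof.
  intros Hreas HD. assert (HDR : (0 < INR D)%R) by (apply lt_0_INR; exact HD).
  destruct (Hreas (/ (4 * INR D))%R) as [n1 Hn1]; [apply Rinv_0_lt_compat; lra|].
  exists n1. intros k Hk. apply INR_le. rewrite !mult_INR.
  specialize (Hn1 k Hk). replace (INR 4) with 4%R by (simpl; lra).
  apply (Rmult_le_compat_l (4 * INR D)) in Hn1; [|lra].
  rewrite <- Rmult_assoc, Rinv_r in Hn1 by lra. lra.
Qed.

Open Scope R_scope.

Lemma budget_estimate (eps : R) (D H N u : nat) :
  0 < eps -> 2 / eps < INR D -> 4 * INR H / eps < INR N ->
  (D * u <= 2 * D * H + N)%nat -> INR u <= eps * INR N.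
Proof.
  intros Heps HD HN Hu.
  apply le_INR in Hu. rewrite plus_INR, !mult_INR in Hu. simpl (INR 2) in Hu.
  apply (Rmult_lt_compat_r eps) in HD, HN; [|exact Heps..].
  unfold Rdiv in HD, HN. rewrite Rmult_assoc, Rinv_l in HD, HN by lra.
  pose proof (pos_INR H). pose proof (pos_INR N). pose proof (pos_INR u).
  apply (Rmult_le_reg_l (INR D)); [nra|]. nra.
Qed.

Theorem mainTheorem7 (p : nat -> nat) (s : nat -> nat -> nat)
  (Hp : forall n : nat, (1 <= n)%nat -> (2 <= p n)%nat)
  (Hsum : exists lim : R,
     infinite_sum (fun k => INR (ssum p s (S k)) / INR (h p s (S (S k)))) lim)
  (Hreas : reasonable p s)
  (eps : R) (Heps : 0 < eps) (l : nat) (Hl : (1 <= l)%nat) :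
  exists N0 : nat, forall N : nat, (N0 <= N)%nat ->
    forall omega : Z -> bool, InOmega p s omega ->
      exists (A C : list bool) (t : nat) (LA LC : list (nat * nat)),
        window omega 1%Z N = A ++ repeat true t ++ C /\
        good_family p s l A LA /\ good_family p s l C LC /\
        INR (uncovered p s A LA + uncovered p s C LC) <= eps * INR N.
Proof.
  destruct (INR_unbounded (2 / eps)) as [D HD].
  assert (HDpos : (0 < D)%nat).
  { apply INR_lt. simpl. assert (0 < 2 / eps) by (apply Rdiv_lt_0_compat; lra). lra. }
  destruct (reasonable_spacers p s D Hreas HDpos) as [n1 Hn1].
  set (n0 := Nat.max (Nat.max n1 l) 1).
  destruct (INR_unbounded (4 * INR (h p s n0) / eps)) as [N0 HN0].
  exists N0. intros N HN omega Homega.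
  destruct (Homega 1%Z N) as [m [_ [x [y Exy]]]].
  destruct (factor_decomposition p s l D n0 Hp ltac:(lia) ltac:(lia)
              (fun k Hk => Hn1 k ltac:(lia)) m x _ y (eq_sym Exy))
    as [A [t [C [LA [LC [HW [HA [HC Hbudget]]]]]]]].
  exists A, C, t, LA, LC. split; [exact HW|]. split; [exact HA|]. split; [exact HC|].
  rewrite length_window in Hbudget.
  apply (budget_estimate eps D (h p s n0) N); [exact Heps | exact HD | | exact Hbudget].
  apply (Rlt_le_trans _ (INR N0)); [exact HN0 | apply le_INR, HN].
Qed.
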